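(* Let $\mathcal{A}_0\supseteq\mathcal{A}_1\supseteq\mathcal{A}_2\supseteq\cdots$ be a nested sequence of additive categories and let $l\ge2$ be a natural number. Suppose that each $\mathcal{A}_m$ is $l$-uniformly regular coherent and that for every $m\in\mathbb{N}$ the inclusion $\mathcal{A}_{m+1}\to\mathcal{A}_m$ is flat. Then $\mathcal{S}(\mathcal{A}_* )$ and $\mathcal{L}(\mathcal{A}_* )$ are $l$-uniformly regular coherent.
   Context: A nested sequence of additive categories is a decreasing sequence of additive subcategories. $\mathcal{S}(\mathcal{A}_* )$ is the additive category whose objects are sequences $(A_m)_{m\ge0}$ of objects of $\mathcal{A}_0$ such that for every $l$ almost all $A_m$ lie in $\mathcal{A}_l$, and whose morphisms are sequences $(\phi_m\colon A_m\to A'_m)$ of morphisms of $\mathcal{A}_0$ such that for every $l$ almost all $\phi_m$ lie in $\mathcal{A}_l$; structure componentwise. $\mathcal{L}(\mathcal{A}_* )$ is the quotient of $\mathcal{S}(\mathcal{A}_* )$ by the full subcategory of eventually zero sequences: same objects, morphisms identified iff they agree in all but finitely many components. For an additive category $\mathcal{B}$, a $\mathbb{Z}\mathcal{B}$-module is an additive contravariant functor $\mathcal{B}\to$ abelian groups; $\mathcal{B}$ is $l$-uniformly regular coherent if every finitely presented $\mathbb{Z}\mathcal{B}$-module $M$ admits an exact sequence $0\to P_l\to\cdots\to P_0\to M\to0$ with all $P_i$ finitely generated projective. A sequence $A_0\xrightarrow{f_0}A_1\xrightarrow{f_1}A_2$ is exact at $A_1$ if $f_1\circ f_0=0$ and every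 $g\colon A\to A_1$ with $f_1\circ g=0$ is of the form $f_0\circ\bar g$; a functor is flat if it preserves exactness of such sequences. *)

From Stdlib Require Import Arith Lia Setoid Morphisms RelationClasses.
Set Implicit Arguments.
Unset Strict Implicit.

Record Ab : Type := MkAb {
  car :> Type;
  aeq : car -> car -> Prop;
  a0 : car;
  aadd : car -> car -> car;
  aopp : car -> car;
  aeq_equiv : Equivalence aeq;
  aadd_proper : forall x x' y y', aeq x x' -> aeq y y' -> aeq (aadd x y) (aadd x' y');
  aopp_proper : forall x x', aeq x x' -> aeq (aopp x) (aopp x');
  aaddA : forall x y z, aeq (aadd x (aadd y z)) (aadd (aadd x y) z);
  aaddC : forall x y, aeq (aadd x y) (aadd y x);
  aadd0 : forall x, aeq (aadd a0 x) x;
  aaddN : forall x, aeq (aadd (aopp x) x) a0 }.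
Arguments aeq {_} _ _.
Arguments a0 {_}.
Arguments aadd {_} _ _.
Arguments aopp {_} _.
#[global] Existing Instance aeq_equiv.
#[global] Instance aadd_Proper (G : Ab) : Proper (aeq ==> aeq ==> aeq) (@aadd G).
Proof. intros x x' H y y' H'; apply aadd_proper; auto. Qed.
#[global] Instance aopp_Proper (G : Ab) : Proper (aeq ==> aeq) (@aopp G).
Proof. intros x x' H; apply aopp_proper; auto. Qed.

Record PreAdd : Type := MkPreAdd {
  obj :> Type;
  hom : obj -> obj -> Ab;
  idm : forall A, hom A A;
  comp : forall A B C, hom B C -> hom A B -> hom A C;
  comp_proper : forall A B C (g g' : hom B C) (f f' : hom A B),
      aeq g g' -> aeq f f' -> aeq (comp g f) (comp g' f');
  compA : forall A B C D (h : hom C D) (g : hom B C) (f : hom A B),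
      aeq (comp h (comp g f)) (comp (comp h g) f);
  comp1l : forall A B (f : hom A B), aeq (comp (idm B) f) f;
  comp1r : forall A B (f : hom A B), aeq (comp f (idm A)) f;
  compDl : forall A B C (g g' : hom B C) (f : hom A B),
      aeq (comp (aadd g g') f) (aadd (comp g f) (comp g' f));
  compDr : forall A B C (g : hom B C) (f f' : hom A B),
      aeq (comp g (aadd f f')) (aadd (comp g f) (comp g f')) }.
Arguments hom {_} _ _.
Arguments idm {_} _.
Arguments comp {_ _ _ _} _ _.

Definition is_zero_obj (C : PreAdd) (Z : C) : Prop :=
  forall A : C, (exists f : hom A Z, forall g : hom A Z, aeq g f) /\
                (exists f : hom Z A, forall g : hom Z A, aeq g f).
Definition is_biproduct (C : PreAdd) (A B P : C)
  (i1 : hom A P) (i2 : hom B P) (p1 : hom P A) (p2 : hom P B) : Prop :=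
  aeq (comp p1 i1) (idm A) /\ aeq (comp p2 i2) (idm B) /\
  aeq (comp p1 i2) a0 /\ aeq (comp p2 i1) a0 /\
  aeq (aadd (comp i1 p1) (comp i2 p2)) (idm P).
Definition is_additive (C : PreAdd) : Prop :=
  (exists Z : C, is_zero_obj Z) /\
  forall A B : C, exists (P : C) (i1 : hom A P) (i2 : hom B P) (p1 : hom P A) (p2 : hom P B),
      is_biproduct i1 i2 p1 p2.

Definition exact_at (C : PreAdd) (X0 X1 X2 : C) (f0 : hom X0 X1) (f1 : hom X1 X2) : Prop :=
  aeq (comp f1 f0) a0 /\
  forall (X : C) (g : hom X X1), aeq (comp f1 g) a0 ->
     exists gb : hom X X0, aeq g (comp f0 gb).

Definition flat (C D : PreAdd) (Fo : C -> D)
  (Fh : forall A B : C, hom A B -> hom (Fo A) (Fo B)) : Prop :=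
  forall (X0 X1 X2 : C) (f0 : hom X0 X1) (f1 : hom X1 X2),
    exact_at f0 f1 -> exact_at (Fh _ _ f0) (Fh _ _ f1).

(* ---------- Z B-modules: additive contravariant functors B -> Ab ---------- *)
Record Module (C : PreAdd) : Type := MkModule {
  mob :> C -> Ab;
  mmap : forall A B : C, hom A B -> mob B -> mob A;
  mmap_proper : forall A B (f f' : hom A B) x x',
      aeq f f' -> aeq x x' -> aeq (mmap f x) (mmap f' x');
  mmap_add : forall A B (f : hom A B) x y,
      aeq (mmap f (aadd x y)) (aadd (mmap f x) (mmap f y));
  mmap_id : forall A x, aeq (mmap (idm A) x) x;
  mmap_comp : forall A B D (g : hom B D) (f : hom A B) x,
      aeq (mmap (comp g f) x) (mmap f (mmap g x));
  mmap_addf : forall A B (f f' : hom A B) x,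
      aeq (mmap (aadd f f') x) (aadd (mmap f x) (mmap f' x)) }.
Arguments mmap {_} _ {_ _} _ _.

Record MHom (C : PreAdd) (M N : Module C) : Type := MkMHom {
  mh :> forall A : C, M A -> N A;
  mh_proper : forall (A : C) (x x' : M A), aeq x x' -> aeq (@mh A x) (@mh A x');
  mh_add : forall (A : C) (x y : M A), aeq (@mh A (aadd x y)) (aadd (@mh A x) (@mh A y));
  mh_nat : forall (A B : C) (f : hom A B) (x : M B),
      aeq (@mh A (mmap M f x)) (mmap N f (@mh B x)) }.
Arguments mh {_ _ _} _ _ _.

Definition Yo (C : PreAdd) (A : C) : Module C.
Proof.
  refine (@MkModule C (fun B => hom B A) (fun B D f g => comp g f) _ _ _ _ _).
  - intros; apply comp_proper; auto.
  - intros; apply compDl.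
  - intros; apply comp1r.
  - intros; apply compA.
  - intros; apply compDr.
Defined.

Definition mh_epi (C : PreAdd) (M N : Module C) (e : MHom M N) : Prop :=
  forall (A : C) (y : N A), exists x : M A, aeq (e A x) y.
Definition mexact (C : PreAdd) (L M N : Module C) (f : MHom L M) (g : MHom M N) : Prop :=
  forall A : C, (forall x : L A, aeq (g A (f A x)) a0) /\
                (forall y : M A, aeq (g A y) a0 -> exists x : L A, aeq (f A x) y).
Definition zero_module (C : PreAdd) (M : Module C) : Prop :=
  forall (A : C) (x : M A), aeq x a0.

Definition projective (C : PreAdd) (P : Module C) : Prop :=
  forall (N N' : Module C) (p : MHom N N') (g : MHom P N'), mh_epi p ->
    exists h : MHom P N, forall (A : C) (x : P A), aeq (p A (h A x)) (g A x).
Definition fin_gen (C : PreAdd) (M : Module C) : Prop :=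
  exists (A : C) (e : MHom (Yo A) M), mh_epi e.
Definition fg_projective (C : PreAdd) (P : Module C) : Prop :=
  fin_gen P /\ projective P.
Definition fin_pres (C : PreAdd) (M : Module C) : Prop :=
  exists (A1 A0 : C) (d : MHom (Yo A1) (Yo A0)) (e : MHom (Yo A0) M),
    mexact d e /\ mh_epi e.

(* l-uniformly regular coherent: every f.p. M has an exact sequence
   0 -> P_l -> ... -> P_0 -> M -> 0 with P_i f.g. projective.
   Encoded with P_i = 0 for i > l and exactness everywhere. *)
Definition unif_reg_coherent (l : nat) (C : PreAdd) : Prop :=
  forall M : Module C, fin_pres M ->
    exists (P : nat -> Module C) (d : forall i, MHom (P (S i)) (P i)) (e : MHom (P 0) M),
      (forall i, i <= l -> fg_projective (P i)) /\
      (forall i, l < i -> zero_module (P i)) /\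
      mh_epi e /\ mexact (d 0) e /\
      (forall i, mexact (d (S i)) (d i)).

Definition subAb (G : Ab) (P : G -> Prop) (P0 : P a0)
  (Padd : forall x y, P x -> P y -> P (aadd x y))
  (Popp : forall x, P x -> P (aopp x)) : Ab.
Proof.
  refine (@MkAb {x : G | P x} (fun x y => aeq (proj1_sig x) (proj1_sig y))
           (exist _ a0 P0)
           (fun x y => exist _ (aadd (proj1_sig x) (proj1_sig y)) (Padd _ _ (proj2_sig x) (proj2_sig y)))
           (fun x => exist _ (aopp (proj1_sig x)) (Popp _ (proj2_sig x))) _ _ _ _ _ _ _); cbv beta.
  - split; red; intros. reflexivity. symmetry; auto. etransitivity; eauto.
  - intros; apply aadd_proper; auto.
  - intros; apply aopp_proper; auto.
  - intros; apply aaddA.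
  - intros; apply aaddC.
  - intros; apply aadd0.
  - intros; apply aaddN.
Defined.

(* A_0 is the ambient category; A_m given by membership predicates on objects
   and morphisms, each closed under the preadditive structure. *)
Record NestedSeq : Type := MkNested {
  ambient : PreAdd;
  ObjIn : nat -> ambient -> Prop;
  HomIn : nat -> forall A B : ambient, hom A B -> Prop;
  ObjIn_0 : forall A, ObjIn 0 A;
  HomIn_0 : forall A B (f : hom A B), @HomIn 0 A B f;
  ObjIn_dec : forall m A, ObjIn (S m) A -> ObjIn m A;
  HomIn_dec : forall m A B (f : hom A B), @HomIn (S m) A B f -> @HomIn m A B f;
  HomIn_obj : forall m A B (f : hom A B), @HomIn m A B f -> ObjIn m A /\ ObjIn m B;
  HomIn_proper : forall m A B (f f' : hom A B), aeq f f' -> @HomIn m A B f -> @HomIn m A B f';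
  HomIn_id : forall m A, ObjIn m A -> @HomIn m A A (idm A);
  HomIn_comp : forall m A B C (g : hom B C) (f : hom A B),
      @HomIn m B C g -> @HomIn m A B f -> @HomIn m A C (comp g f);
  HomIn_zero : forall m A B, ObjIn m A -> ObjIn m B -> @HomIn m A B a0;
  HomIn_add : forall m A B (f f' : hom A B),
      @HomIn m A B f -> @HomIn m A B f' -> @HomIn m A B (aadd f f');
  HomIn_opp : forall m A B (f : hom A B), @HomIn m A B f -> @HomIn m A B (aopp f) }.

Arguments ObjIn : clear implicits.
Arguments HomIn : clear implicits.
Arguments ObjIn_dec {N m A} _ : rename.
Arguments HomIn_dec {N m A B f} _ : rename.
Arguments HomIn_id {N m A} _ : rename.
Arguments HomIn_comp {N m A B C g f} _ _ : rename.
Arguments HomIn_zero {N m A B} _ _ : rename.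
Arguments HomIn_add {N m A B f f'} _ _ : rename.
Arguments HomIn_opp {N m A B f} _ : rename.

Definition subhom (N : NestedSeq) (m : nat) (X Y : {A : ambient N | ObjIn N m A}) : Ab :=
  @subAb (hom (proj1_sig X) (proj1_sig Y)) (HomIn N m (proj1_sig X) (proj1_sig Y))
    (HomIn_zero (proj2_sig X) (proj2_sig Y))
    (fun x y => HomIn_add (N:=N) (m:=m) (f:=x) (f':=y))
    (fun x => HomIn_opp (N:=N) (m:=m) (f:=x)).

Arguments subhom : clear implicits.

Definition subcat (N : NestedSeq) (m : nat) : PreAdd.
Proof.
  refine (@MkPreAdd {A : ambient N | ObjIn N m A} (subhom N m)
     (fun X => exist _ (idm (proj1_sig X)) (HomIn_id (proj2_sig X)))
     (fun X Y Z g f => exist _ (comp (proj1_sig g) (proj1_sig f))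
                              (HomIn_comp (proj2_sig g) (proj2_sig f))) _ _ _ _ _ _); cbv beta.
  - intros; apply comp_proper; auto.
  - intros; apply compA.
  - intros; apply comp1l.
  - intros; apply comp1r.
  - intros; apply compDl.
  - intros; apply compDr.
Defined.

Definition incl_obj (N : NestedSeq) (m : nat) (X : subcat N (S m)) : subcat N m :=
  exist _ (proj1_sig X) (ObjIn_dec (proj2_sig X)).
Definition incl_hom (N : NestedSeq) (m : nat) (X Y : subcat N (S m)) (f : hom X Y) :
  @hom (subcat N m) (incl_obj X) (incl_obj Y) :=
  exist _ (proj1_sig f) (HomIn_dec (proj2_sig f)).

Definition eventually (P : nat -> Prop) : Prop := exists n0, forall m, n0 <= m -> P m.
Definition always (P : nat -> Prop) : Prop := forall m, P m.

Lemma ev_and (P Q : nat -> Prop) : eventually P -> eventually Q -> eventually (fun m => P m /\ Q m).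
Proof. intros [a Ha] [b Hb]; exists (a + b); intros m Hm; split; [apply Ha|apply Hb]; lia. Qed.
Lemma ev_mono (P Q : nat -> Prop) : (forall m, P m -> Q m) -> eventually P -> eventually Q.
Proof. intros H [a Ha]; exists a; auto. Qed.

(* the two identifications of morphism sequences: componentwise (S) and
   "agree in all but finitely many components" (L) *)
Record SeqFilter : Type := MkSF {
  sf :> (nat -> Prop) -> Prop;
  sf_true : sf (fun _ => True);
  sf_mono : forall P Q : nat -> Prop, (forall m, P m -> Q m) -> sf P -> sf Q;
  sf_and : forall P Q : nat -> Prop, sf P -> sf Q -> sf (fun m => P m /\ Q m) }.

Definition alwaysF : SeqFilter.
Proof. refine (@MkSF always _ _ _); unfold always; firstorder. Defined.
Definition eventuallyF : SeqFilter.
Proof.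
  refine (@MkSF eventually _ ev_mono ev_and). exists 0; auto.
Defined.

Definition SObj (N : NestedSeq) : Type :=
  {a : nat -> ambient N | forall l, eventually (fun m => ObjIn N l (a m))}.

Lemma sf_pw (F : SeqFilter) (P : nat -> Prop) : (forall m, P m) -> F P.
Proof. intros H; apply (sf_mono (P := fun _ => True)); auto; apply sf_true. Qed.

Definition SHP (N : NestedSeq) (a b : SObj N)
  (phi : forall m, hom (proj1_sig a m) (proj1_sig b m)) : Prop :=
  forall l, eventually (fun m => HomIn N l _ _ (phi m)).

Lemma shp_zero (N : NestedSeq) (a b : SObj N) : SHP (a:=a) (b:=b) (fun m => a0).
Proof.
  intros l; apply (ev_mono (P := fun m => ObjIn N l (proj1_sig a m) /\ ObjIn N l (proj1_sig b m))).
  + intros m [H1 H2]; apply HomIn_zero; auto.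
  + apply ev_and; [apply (proj2_sig a) | apply (proj2_sig b)].
Qed.
Lemma shp_add (N : NestedSeq) (a b : SObj N) x y :
  SHP (a:=a) (b:=b) x -> SHP y -> SHP (fun m => aadd (x m) (y m)).
Proof.
  intros Hx Hy l; eapply ev_mono; [|apply ev_and; [apply (Hx l)|apply (Hy l)]].
  intros m [H1 H2]; apply HomIn_add; auto.
Qed.
Lemma shp_opp (N : NestedSeq) (a b : SObj N) x :
  SHP (a:=a) (b:=b) x -> SHP (fun m => aopp (x m)).
Proof. intros Hx l; eapply ev_mono; [|apply (Hx l)]. intros m H; apply HomIn_opp; auto. Qed.
Lemma shp_id (N : NestedSeq) (a : SObj N) : SHP (a:=a) (b:=a) (fun m => idm (proj1_sig a m)).
Proof. intros l; eapply ev_mono; [|apply (proj2_sig a l)]; intros m H; apply HomIn_id; auto. Qed.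
Lemma shp_comp (N : NestedSeq) (a b c : SObj N) g f :
  SHP (a:=b) (b:=c) g -> SHP (a:=a) (b:=b) f -> SHP (a:=a) (b:=c) (fun m => comp (g m) (f m)).
Proof.
  intros Hg Hf l; eapply ev_mono; [|apply ev_and; [apply (Hg l)|apply (Hf l)]].
  intros m [H1 H2]; apply HomIn_comp; auto.
Qed.

Definition seqAb (N : NestedSeq) (F : SeqFilter) (a b : SObj N) : Ab.
Proof.
  refine (@MkAb {phi : forall m, hom (proj1_sig a m) (proj1_sig b m) | SHP (a:=a) (b:=b) phi}
    (fun x y => F (fun m => aeq (proj1_sig x m) (proj1_sig y m)))
    (exist _ (fun m => a0) (shp_zero a b))
    (fun x y => exist _ (fun m => aadd (proj1_sig x m) (proj1_sig y m)) (shp_add (proj2_sig x) (proj2_sig y)))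
    (fun x => exist _ (fun m => aopp (proj1_sig x m)) (shp_opp (proj2_sig x))) _ _ _ _ _ _ _); cbv beta.
  - split; red; intros.
    + apply sf_pw; intros; reflexivity.
    + eapply sf_mono; [|eauto]; intros; symmetry; auto.
    + eapply sf_mono; [|apply sf_and; [exact H|exact H0]]; intros m [H1 H2]; etransitivity; eauto.
  - intros x x' y y' H1 H2; eapply sf_mono; [|apply sf_and; [exact H1|exact H2]];
      intros m [H3 H4]; apply aadd_proper; auto.
  - intros x x' H; eapply sf_mono; [|exact H]; intros m H3; apply aopp_proper; auto.
  - intros; apply sf_pw; intros; apply aaddA.
  - intros; apply sf_pw; intros; apply aaddC.
  - intros; apply sf_pw; intros; apply aadd0.
  - intros; apply sf_pw; intros; apply aaddN.
Defined.

Arguments seqAb : clear implicits.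

Definition seqcat (N : NestedSeq) (F : SeqFilter) : PreAdd.
Proof.
  refine (@MkPreAdd (SObj N) (seqAb N F)
     (fun a => exist _ (fun m => idm (proj1_sig a m)) (shp_id a))
     (fun a b c g f => exist _ (fun m => comp (proj1_sig g m) (proj1_sig f m))
                             (shp_comp (proj2_sig g) (proj2_sig f))) _ _ _ _ _ _); cbv beta.
  - intros A B C g g' f f' H1 H2; eapply sf_mono; [|apply sf_and; [exact H1|exact H2]];
      intros m [H3 H4]; apply comp_proper; auto.
  - intros; apply sf_pw; intros; apply compA.
  - intros; apply sf_pw; intros; apply comp1l.
  - intros; apply sf_pw; intros; apply comp1r.
  - intros; apply sf_pw; intros; apply compDl.
  - intros; apply sf_pw; intros; apply compDr.
Defined.

Definition SCat (N : NestedSeq) : PreAdd := seqcat N alwaysF.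
(* L(A_-): quotient by eventually-zero sequences *)
Definition LCat (N : NestedSeq) : PreAdd := seqcat N eventuallyF.

(* A finitely presented module is the cokernel of [Hom(-, phi)] for a morphism [phi : X1 -> X0],
   and a resolution of it by finitely generated projectives can be encoded by idempotents [e_i]
   on objects [B_i] (the projectives being the images of [Hom(-, e_i)]) with differentials
   between them.  In an additive category a Schanuel-type splice turns any such resolution of
   length [l >= 2] into one of the same length whose degree-0 term is [Hom(-, X0)] itself.
   Given a morphism [phi = (phi_m)] of S(A_-) or L(A_-), pick levels [k_m -> oo] with
   [phi_m] in [A_(k_m)] and such a resolution of [phi_m] inside [A_(k_m)]; these assemble
   componentwise into a resolution of [phi].  The only non-componentwise point is exactness:
   a morphism that lies in [A_j] at stage [m] must be lifted inside [A_j], and flatness of the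
   inclusions transports the exactness of [B_(i+2) (+) B_(i+1) -> B_(i+1) -> B_i] from
   [A_(k_m)] down to [A_j]. *)

From Stdlib Require Import Lia Setoid Morphisms.
From Stdlib Require Import Classical ClassicalEpsilon ChoiceFacts.
Set Implicit Arguments.
Unset Strict Implicit.

Lemma dep_choice (A : Type) (B : A -> Type) (P : forall a, B a -> Prop) :
  (forall a, exists b, P a b) -> exists f : forall a, B a, forall a, P a (f a).
Proof. exact (non_dep_dep_functional_choice choice (A := A) B P). Qed.

Section AbelianGroup.
Variable G : Ab.
Implicit Types x y z : G.

Lemma aadd0r x : aeq (aadd x a0) x.
Proof. rewrite aaddC; apply aadd0. Qed.

Lemma aaddNr x : aeq (aadd x (aopp x)) a0.
Proof. rewrite aaddC; apply aaddN. Qed.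

Lemma aadd_eq0 x y : aeq (aadd x y) x -> aeq y a0.
Proof.
  intros H. rewrite <- (aadd0 y), <- (aaddN x) at 1. rewrite <- aaddA, H. apply aaddN.
Qed.

Lemma aopp_unique x y : aeq (aadd x y) a0 -> aeq x (aopp y).
Proof.
  intros H. rewrite <- (aadd0r x), <- (aaddNr y), aaddA, H. apply aadd0.
Qed.

Lemma aopp0 : aeq (aopp (@a0 G)) a0.
Proof. symmetry; apply aopp_unique, aadd0. Qed.

Lemma aoppK x : aeq (aopp (aopp x)) x.
Proof. symmetry; apply aopp_unique, aaddNr. Qed.

Lemma aopp_add_eq0 x y : aeq (aadd (aopp x) y) a0 -> aeq y x.
Proof. intros H. rewrite aaddC in H. apply aopp_unique in H. rewrite H; apply aoppK. Qed.

Lemma aoppD x y : aeq (aopp (aadd x y)) (aadd (aopp x) (aopp y)).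
Proof.
  symmetry; apply aopp_unique.
  rewrite (aaddC x y), aaddA, <- (aaddA (aopp x)), aaddN, aadd0r, aaddN; reflexivity.
Qed.

Lemma asubK x y : aeq (aadd (aadd x (aopp y)) y) x.
Proof. rewrite <- aaddA, aaddN, aadd0r; reflexivity. Qed.

Lemma aaddK x y : aeq (aadd (aadd x y) (aopp y)) x.
Proof. rewrite <- aaddA, aaddNr, aadd0r; reflexivity. Qed.

Lemma asub_eq x y z : aeq (aadd x (aopp y)) z -> aeq x (aadd y z).
Proof. intros H. rewrite <- H, aaddC, asubK; reflexivity. Qed.

Lemma asub_subD x y x' y' :
  aeq (aadd (aadd x y) (aopp (aadd x' y'))) (aadd (aadd x (aopp x')) (aadd y (aopp y'))).
Proof.
  rewrite aoppD, <- !aaddA. apply aadd_proper; [reflexivity|].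
  rewrite !aaddA, (aaddC y (aopp x')); reflexivity.
Qed.

End AbelianGroup.

#[global] Instance comp_Proper (C : PreAdd) (A B D : C) :
  Proper (aeq ==> aeq ==> aeq) (@comp C A B D).
Proof. intros g g' Hg f f' Hf; apply comp_proper; auto. Qed.

Section Preadditive.
Variable C : PreAdd.

Lemma comp0l (A B D : C) (f : hom A B) : aeq (comp (@a0 (hom B D)) f) a0.
Proof. apply (@aadd_eq0 _ (comp a0 f)). rewrite <- compDl, aadd0; reflexivity. Qed.

Lemma comp0r (A B D : C) (g : hom B D) : aeq (comp g (@a0 (hom A B))) a0.
Proof. apply (@aadd_eq0 _ (comp g a0)). rewrite <- compDr, aadd0; reflexivity. Qed.

Lemma compNl (A B D : C) (g : hom B D) (f : hom A B) :
  aeq (comp (aopp g) f) (aopp (comp g f)).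
Proof. apply aopp_unique. rewrite <- compDl, aaddN, comp0l; reflexivity. Qed.

Lemma compNr (A B D : C) (g : hom B D) (f : hom A B) :
  aeq (comp g (aopp f)) (aopp (comp g f)).
Proof. apply aopp_unique. rewrite <- compDr, aaddN, comp0r; reflexivity. Qed.

End Preadditive.

#[global] Instance mmap_Proper (C : PreAdd) (M : Module C) (A B : C) :
  Proper (aeq ==> aeq ==> aeq) (@mmap C M A B).
Proof. intros f f' Hf x x' Hx; apply mmap_proper; auto. Qed.

#[global] Instance mh_Proper (C : PreAdd) (M N : Module C) (h : MHom M N) (A : C) :
  Proper (aeq ==> aeq) (h A).
Proof. intros x x' H; apply mh_proper; auto. Qed.

Lemma mh0 (C : PreAdd) (M N : Module C) (h : MHom M N) (A : C) : aeq (h A a0) a0.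
Proof. apply (@aadd_eq0 _ (h A a0)). rewrite <- mh_add, aadd0; reflexivity. Qed.

Lemma mmap0 (C : PreAdd) (M : Module C) (A B : C) (f : hom A B) : aeq (mmap M f a0) a0.
Proof. apply (@aadd_eq0 _ (mmap M f a0)). rewrite <- mmap_add, aadd0; reflexivity. Qed.

Lemma yoneda_mh (C : PreAdd) (A : C) (M : Module C) (F : MHom (Yo A) M) (X : C) (g : hom X A) :
  aeq (F X g) (mmap M g (F A (idm A))).
Proof. rewrite <- mh_nat. apply mh_proper. symmetry; apply comp1l. Qed.

Definition zero_mh (C : PreAdd) (M N : Module C) : MHom M N.
Proof.
  refine (@MkMHom C M N (fun X x => a0) _ _ _); intros.
  - reflexivity.
  - symmetry; apply aadd0.
  - symmetry; apply mmap0.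
Defined.

Definition id_mh (C : PreAdd) (M : Module C) : MHom M M.
Proof. refine (@MkMHom C M M (fun X x => x) _ _ _); intros; auto; reflexivity. Defined.

Lemma zero_fg_projective (C : PreAdd) (M : Module C) (Z : C) :
  zero_module M -> fg_projective M.
Proof.
  intros HM. split.
  - exists Z, (zero_mh (Yo Z) M). intros X y. exists a0. symmetry; apply HM.
  - intros N N' p g Hp. exists (zero_mh M N). intros A x. simpl.
    rewrite mh0, (HM A x), mh0; reflexivity.
Qed.

Lemma fg_projective_retract (C : PreAdd) (P : Module C) : fg_projective P ->
  exists (A : C) (pi : MHom (Yo A) P) (s : MHom P (Yo A)), forall X x, aeq (pi X (s X x)) x.
Proof.
  intros [[A [pi Hpi]] Hproj].
  destruct (Hproj _ _ pi (id_mh P) Hpi) as [s Hs]. exists A, pi, s. exact Hs.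
Qed.

Section ImageModule.
Variables (C : PreAdd) (B : C) (e : hom B B).

Definition fixed (X : C) (g : hom X B) : Prop := aeq (comp e g) g.

Lemma fixed0 X : fixed (@a0 (hom X B)).
Proof. apply comp0r. Qed.

Lemma fixedD X (x y : hom X B) : fixed x -> fixed y -> fixed (aadd x y).
Proof. unfold fixed; intros H1 H2; rewrite compDr, H1, H2; reflexivity. Qed.

Lemma fixedN X (x : hom X B) : fixed x -> fixed (aopp x).
Proof. unfold fixed; intros H; rewrite compNr, H; reflexivity. Qed.

Lemma fixed_comp X Y (g : hom Y B) (f : hom X Y) : fixed g -> fixed (comp g f).
Proof. unfold fixed; intros H; rewrite compA, H; reflexivity. Qed.

Definition image_ab (X : C) : Ab :=
  @subAb (hom X B) (@fixed X) (@fixed0 X) (@fixedD X) (@fixedN X).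

Definition image_mod : Module C.
Proof.
  refine (@MkModule C image_ab
    (fun X Y f g => exist _ (comp (proj1_sig g) f) (fixed_comp f (proj2_sig g))) _ _ _ _ _);
    simpl; intros.
  - apply comp_proper; auto.
  - apply compDl.
  - apply comp1r.
  - apply compA.
  - apply compDr.
Defined.

Lemma image_mod_zero : aeq e a0 -> zero_module image_mod.
Proof.
  intros H X x. simpl. rewrite <- (proj2_sig x). unfold fixed. rewrite H. apply comp0l.
Qed.

Hypothesis e_idem : aeq (comp e e) e.

Lemma fixed_idem X (g : hom X B) : fixed (comp e g).
Proof. unfold fixed; rewrite compA, e_idem; reflexivity. Qed.

Definition image_proj : MHom (Yo B) image_mod.
Proof.
  refine (@MkMHom C (Yo B) image_mod (fun X g => exist _ (comp e g) (fixed_idem g)) _ _ _);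
    simpl; intros.
  - rewrite H; reflexivity.
  - apply compDr.
  - apply compA.
Defined.

(* By Yoneda it suffices to lift the image of the generator [e]. *)
Lemma image_mod_projective : projective image_mod.
Proof.
  intros N N' p g Hp.
  destruct (Hp B (g B (exist (@fixed B) e e_idem : image_mod B))) as [x0 Hx0].
  unshelve eexists.
  - refine (@MkMHom C image_mod N (fun X w => mmap N (proj1_sig w) x0) _ _ _); simpl; intros.
    + apply mmap_proper; [exact H | reflexivity].
    + apply mmap_addf.
    + apply mmap_comp.
  - simpl. intros A x. rewrite mh_nat, Hx0, <- mh_nat.
    apply mh_proper. simpl. apply (proj2_sig x).
Qed.

Lemma image_mod_fg_projective : fg_projective image_mod.
Proof.
  split; [|exact image_mod_projective].
  exists B, image_proj. intros X y. exists (proj1_sig y). exact (proj2_sig y).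
Qed.

End ImageModule.

Definition image_map (C : PreAdd) (B1 B0 : C) (e1 : hom B1 B1) (e0 : hom B0 B0) (d : hom B1 B0)
  (Hd : fixed e0 d) : MHom (image_mod e1) (image_mod e0).
Proof.
  refine (@MkMHom C (image_mod e1) (image_mod e0)
    (fun X g => exist _ (comp d (proj1_sig g)) (fixed_comp (proj1_sig g) Hd)) _ _ _);
    simpl; intros.
  - rewrite H; reflexivity.
  - apply compDr.
  - apply compA.
Defined.

(* The [i]-th term of a resolution is the image of the idempotent [iidem i] on [iobj i]. *)
Record IdemComplex (C : PreAdd) (X0 : C) : Type := MkIdemComplex {
  iobj : nat -> C;
  iidem : forall i, hom (iobj i) (iobj i);
  idiff : forall i, hom (iobj (S i)) (iobj i);
  iaug : hom (iobj 0) X0 }.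

Arguments iobj {C X0} _ _.
Arguments iidem {C X0} _ _.
Arguments idiff {C X0} _ _.
Arguments iaug {C X0} _.

(* [iaug] induces [P_0 -> coker Hom(-, phi)]; [res_aug_surj] and [res_exact0] say that
   [P_1 -> P_0 -> coker Hom(-, phi) -> 0] is exact. *)
Record is_resolution (C : PreAdd) (l : nat) (X1 X0 : C) (phi : hom X1 X0)
    (R : IdemComplex X0) : Prop := {
  res_idem : forall i, aeq (comp (iidem R i) (iidem R i)) (iidem R i);
  res_diff_idem : forall i, aeq (comp (idiff R i) (iidem R (S i))) (idiff R i);
  res_idem_diff : forall i, fixed (iidem R i) (idiff R i);
  res_aug_idem : aeq (comp (iaug R) (iidem R 0)) (iaug R);
  res_diff_diff : forall i, aeq (comp (idiff R i) (idiff R (S i))) a0;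
  res_aug_diff : exists t, aeq (comp (iaug R) (idiff R 0)) (comp phi t);
  res_aug_surj : forall X (g : hom X X0), exists h k, aeq g (aadd (comp (iaug R) h) (comp phi k));
  res_exact0 : forall X (h : hom X (iobj R 0)) (k : hom X X1),
      fixed (iidem R 0) h -> aeq (comp (iaug R) h) (comp phi k) ->
      exists h', fixed (iidem R 1) h' /\ aeq (comp (idiff R 0) h') h;
  res_exact : forall i X (g : hom X (iobj R (S i))),
      fixed (iidem R (S i)) g -> aeq (comp (idiff R i) g) a0 ->
      exists h, fixed (iidem R (S (S i))) h /\ aeq (comp (idiff R (S i)) h) g;
  res_zero : forall i, l < i -> aeq (iidem R i) a0 }.

(* A normal resolution has [Hom(-, X0)] itself in degree 0, with [iaug] as first differential. *)
Section NormalComplex.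
Variables (C : PreAdd) (X0 : C) (R : IdemComplex X0).

Definition nobj (i : nat) : C := match i with 0 => X0 | S j => iobj R j end.

Definition nidem (i : nat) : hom (nobj i) (nobj i) :=
  match i return hom (nobj i) (nobj i) with 0 => idm X0 | S j => iidem R j end.

Definition ndiff (i : nat) : hom (nobj (S i)) (nobj i) :=
  match i return hom (nobj (S i)) (nobj i) with 0 => iaug R | S j => idiff R j end.

End NormalComplex.

Record is_normal_resolution (C : PreAdd) (l : nat) (X1 X0 : C) (phi : hom X1 X0)
    (R : IdemComplex X0) : Prop := {
  nres_idem : forall i, aeq (comp (nidem R i) (nidem R i)) (nidem R i);
  nres_diff_idem : forall i, aeq (comp (ndiff R i) (nidem R (S i))) (ndiff R i);
  nres_idem_diff : forall i, fixed (nidem R i) (ndiff R i);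
  nres_diff_diff : forall i, aeq (comp (ndiff R i) (ndiff R (S i))) a0;
  nres_aug_phi : exists u, aeq (iaug R) (comp phi u);
  nres_phi_aug : exists v, aeq phi (comp (iaug R) v);
  nres_exact : forall i X (g : hom X (nobj R (S i))),
      fixed (nidem R (S i)) g -> aeq (comp (ndiff R i) g) a0 ->
      exists h, fixed (nidem R (S (S i))) h /\ aeq (comp (ndiff R (S i)) h) g;
  nres_zero : forall i, l < i -> aeq (nidem R i) a0 }.

Section NormalResolutionModules.
Variables (C : PreAdd) (l : nat) (M : Module C) (A1 A0 : C).
Variables (D : MHom (Yo A1) (Yo A0)) (E : MHom (Yo A0) M).
Hypotheses (DE_exact : mexact D E) (E_epi : mh_epi E).
Variables (R : IdemComplex A0).
Hypothesis R_res : is_normal_resolution l (D A1 (idm A1)) R.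

Lemma D_comp X (g : hom X A1) : aeq (D X g) (comp (D A1 (idm A1)) g).
Proof. apply yoneda_mh. Qed.

Definition nres_mod (i : nat) : Module C := image_mod (nidem R i).

Definition nres_mh (i : nat) : MHom (nres_mod (S i)) (nres_mod i) :=
  image_map (nidem R (S i)) (nres_idem_diff R_res i).

Definition nres_aug_mh : MHom (nres_mod 0) M.
Proof.
  refine (@MkMHom C (nres_mod 0) M (fun X g => E X (proj1_sig g)) _ _ _); simpl; intros.
  - rewrite H; reflexivity.
  - apply mh_add.
  - exact (mh_nat E f (proj1_sig x)).
Defined.

Lemma nres_aug_mh_epi : mh_epi nres_aug_mh.
Proof.
  intros X y. destruct (E_epi y) as [x Hx].
  exists (exist (@fixed C _ (idm A0) X) x (comp1l x)). exact Hx.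
Qed.

Lemma nres_exact_aug : mexact (nres_mh 0) nres_aug_mh.
Proof.
  intros X. split.
  - intros x. destruct (nres_aug_phi R_res) as [u Hu].
    change (aeq (E X (comp (iaug R) (proj1_sig x))) a0).
    rewrite Hu, <- compA, <- D_comp. apply (proj1 (DE_exact X)).
  - intros y Hy. destruct (proj2 (DE_exact X) _ Hy) as [x Hx].
    destruct (nres_phi_aug R_res) as [v Hv].
    exists (exist _ _ (fixed_idem (nres_idem R_res 1) (comp v x))). simpl.
    rewrite compA, (nres_diff_idem R_res 0). simpl.
    rewrite <- Hx, D_comp, Hv, compA; reflexivity.
Qed.

Lemma nres_exact_mh i : mexact (nres_mh (S i)) (nres_mh i).
Proof.
  intros X. split.
  - intros x. simpl. rewrite compA, (nres_diff_diff R_res i). apply comp0l.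
  - intros y Hy. destruct (nres_exact R_res (proj2_sig y) Hy) as [h [H1 H2]].
    exists (exist (@fixed C _ (nidem R (S (S i))) X) h H1). exact H2.
Qed.

End NormalResolutionModules.

Lemma urc_of_normal_resolutions (C : PreAdd) (l : nat) :
  (forall (X1 X0 : C) (phi : hom X1 X0), exists R : IdemComplex X0, is_normal_resolution l phi R) ->
  unif_reg_coherent l C.
Proof.
  intros Hres M [A1 [A0 [D [E [HDE HE]]]]].
  destruct (Hres A1 A0 (D A1 (idm A1))) as [R HR].
  exists (nres_mod R), (nres_mh HR), (nres_aug_mh E R).
  split; [|split; [|split; [|split]]].
  - intros i _. apply image_mod_fg_projective, (nres_idem HR).
  - intros i Hi. apply image_mod_zero, (nres_zero HR), Hi.
  - apply nres_aug_mh_epi, HE.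
  - apply nres_exact_aug; assumption.
  - apply nres_exact_mh.
Qed.

Section Cokernel.
Variables (C : PreAdd) (X1 X0 : C) (phi : hom X1 X0).

Definition coker_eq (X : C) (g g' : hom X X0) : Prop :=
  exists k : hom X X1, aeq (aadd g (aopp g')) (comp phi k).

Lemma coker_eq_of_eq X (g g' : hom X X0) : aeq g g' -> coker_eq g g'.
Proof. intros H. exists a0. rewrite H, aaddNr, comp0r; reflexivity. Qed.

Definition coker_ab (X : C) : Ab.
Proof.
  refine (@MkAb (hom X X0) (@coker_eq X) a0 aadd aopp _ _ _ _ _ _ _).
  - split.
    + intros x; apply coker_eq_of_eq; reflexivity.
    + intros x y [k Hk]. exists (aopp k).
      rewrite compNr, <- Hk, aoppD, aoppK, aaddC; reflexivity.
    + intros x y z [k Hk] [k' Hk']. exists (aadd k k'). rewrite compDr, <- Hk, <- Hk'.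
      rewrite <- aaddA, (aaddA (aopp y)), aaddN, aadd0; reflexivity.
  - intros x x' y y' [k Hk] [k' Hk']. exists (aadd k k').
    rewrite compDr, <- Hk, <- Hk'. apply asub_subD.
  - intros x x' [k Hk]. exists (aopp k). rewrite compNr, <- Hk, aoppD; reflexivity.
  - intros; apply coker_eq_of_eq, aaddA.
  - intros; apply coker_eq_of_eq, aaddC.
  - intros; apply coker_eq_of_eq, aadd0.
  - intros; apply coker_eq_of_eq, aaddN.
Defined.

Definition coker_mod : Module C.
Proof.
  refine (@MkModule C coker_ab (fun A B f g => comp g f) _ _ _ _ _); simpl; intros.
  - destruct H0 as [k Hk]. exists (comp k f').
    rewrite compA, <- Hk, H, compDl, compNl; reflexivity.
  - apply coker_eq_of_eq, compDl.
  - apply coker_eq_of_eq, comp1r.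
  - apply coker_eq_of_eq, compA.
  - apply coker_eq_of_eq, compDr.
Defined.

Definition yo_hom : MHom (Yo X1) (Yo X0).
Proof.
  refine (@MkMHom C (Yo X1) (Yo X0) (fun X g => comp phi g) _ _ _); simpl; intros.
  - rewrite H; reflexivity.
  - apply compDr.
  - apply compA.
Defined.

Definition coker_proj : MHom (Yo X0) coker_mod.
Proof.
  refine (@MkMHom C (Yo X0) coker_mod (fun X g => g) _ _ _); simpl; intros;
    apply coker_eq_of_eq; [exact H | reflexivity | reflexivity].
Defined.

Lemma coker_eq0 X (g : hom X X0) : coker_eq g a0 <-> exists k, aeq g (comp phi k).
Proof.
  unfold coker_eq. split; intros [k Hk]; exists k.
  - rewrite <- Hk, aopp0, aadd0r; reflexivity.
  - rewrite aopp0, aadd0r; exact Hk.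
Qed.

Lemma coker_mod_fin_pres : fin_pres coker_mod.
Proof.
  exists X1, X0, yo_hom, coker_proj. split.
  - intros X. split.
    + intros x. apply coker_eq0. exists x; reflexivity.
    + intros y Hy. destruct (proj1 (coker_eq0 y) Hy) as [k Hk]. exists k. symmetry; exact Hk.
  - intros X y. exists y. apply coker_eq_of_eq; reflexivity.
Qed.

End Cokernel.

Section Retract.
Variables (C : PreAdd) (A : C) (P : Module C) (pi : MHom (Yo A) P) (s : MHom P (Yo A)).

Definition retract_idem : hom A A := s A (pi A (idm A)).

Lemma s_pi X (g : hom X A) : aeq (s X (pi X g)) (comp retract_idem g).
Proof. rewrite (yoneda_mh pi g), (mh_nat s); reflexivity. Qed.

Hypothesis pi_s : forall X x, aeq (pi X (s X x)) x.

Lemma retract_idem_idem : aeq (comp retract_idem retract_idem) retract_idem.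
Proof. rewrite <- s_pi. unfold retract_idem at 1. rewrite pi_s; reflexivity. Qed.

Lemma fixed_retract X (x : P X) : fixed retract_idem (s X x).
Proof. unfold fixed. rewrite <- s_pi, pi_s; reflexivity. Qed.

Lemma pi_retract_idem X (g : hom X A) : aeq (pi X (comp retract_idem g)) (pi X g).
Proof. rewrite <- s_pi, pi_s; reflexivity. Qed.

End Retract.

Section RetractMap.
Variables (C : PreAdd) (A0 A1 : C) (P0 P1 : Module C).
Variables (pi0 : MHom (Yo A0) P0) (s0 : MHom P0 (Yo A0)).
Variables (pi1 : MHom (Yo A1) P1) (s1 : MHom P1 (Yo A1)).
Variable dd : MHom P1 P0.

Definition retract_map : hom A1 A0 := s0 A1 (dd A1 (pi1 A1 (idm A1))).

Lemma s_dd_pi X (g : hom X A1) : aeq (s0 X (dd X (pi1 X g))) (comp retract_map g).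
Proof. rewrite (yoneda_mh pi1 g), (mh_nat dd), (mh_nat s0); reflexivity. Qed.

Lemma retract_map_idem :
  (forall X x, aeq (pi1 X (s1 X x)) x) ->
  aeq (comp retract_map (retract_idem pi1 s1)) retract_map.
Proof. intros pi1_s1. rewrite <- s_dd_pi. unfold retract_idem. rewrite pi1_s1; reflexivity. Qed.

End RetractMap.

Section ResolutionOfRetracts.
Variables (C : PreAdd) (l : nat) (X1 X0 : C) (phi : hom X1 X0).
Variables (P : nat -> Module C) (d : forall i, MHom (P (S i)) (P i)).
Variable eps : MHom (P 0) (coker_mod phi).
Hypotheses (eps_epi : mh_epi eps) (eps_exact : mexact (d 0) eps).
Hypotheses (d_exact : forall i, mexact (d (S i)) (d i)).
Hypothesis P_zero : forall i, l < i -> zero_module (P i).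
Variables (A : nat -> C) (pi : forall i, MHom (Yo (A i)) (P i)).
Variable s : forall i, MHom (P i) (Yo (A i)).
Hypothesis pi_s : forall i X x, aeq (pi i X (s i X x)) x.

Local Notation e i := (retract_idem (pi i) (s i)).

Definition retract_aug : hom (A 0) X0 := comp (eps (A 0) (pi 0 (A 0) (idm (A 0)))) (e 0).

Definition retract_complex : IdemComplex X0 :=
  MkIdemComplex (fun i => e i) (fun i => retract_map (s i) (pi (S i)) (d i)) retract_aug.

Lemma eps_pi X (g : hom X (A 0)) :
  @aeq (coker_mod phi X) (eps X (pi 0 X g)) (comp retract_aug g).
Proof.
  rewrite <- (pi_retract_idem (@pi_s 0) g), (yoneda_mh (pi 0) (comp (e 0) g)), (mh_nat eps).
  apply coker_eq_of_eq. apply compA.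
Qed.

Lemma retract_lift i X (g : hom X (A i)) (z : P (S i) X) :
  aeq (d i X z) (pi i X g) -> fixed (e i) g ->
  fixed (e (S i)) (s _ X z) /\ aeq (comp (retract_map (s i) (pi (S i)) (d i)) (s _ X z)) g.
Proof.
  intros Hz Hg. split; [apply fixed_retract, pi_s|].
  rewrite <- s_dd_pi, pi_s, Hz, s_pi. exact Hg.
Qed.

Lemma retract_complex_resolution : is_resolution l phi retract_complex.
Proof.
  constructor; simpl.
  - intros i. apply retract_idem_idem, pi_s.
  - intros i. apply retract_map_idem, pi_s.
  - intros i. apply fixed_retract, pi_s.
  - unfold retract_aug. rewrite <- compA, (retract_idem_idem (@pi_s 0)); reflexivity.
  - intros i. rewrite <- s_dd_pi. unfold retract_map. rewrite pi_s, (proj1 (d_exact i _)).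
    exact (mh0 (s i) _).
  - assert (H : @aeq (coker_mod phi _) (comp retract_aug (retract_map (s 0) (pi 1) (d 0))) a0).
    { rewrite <- eps_pi. unfold retract_map. rewrite pi_s. apply (proj1 (eps_exact _)). }
    exact (proj1 (coker_eq0 phi _) H).
  - intros X g. destruct (eps_epi g) as [y Hy].
    assert (H : @aeq (coker_mod phi X) g (comp retract_aug (s 0 X y)))
      by (rewrite <- eps_pi, pi_s; symmetry; exact Hy).
    destruct H as [k Hk]. exists (s 0 X y), k. apply asub_eq, Hk.
  - intros X h k Hh Hk.
    assert (H : @aeq (coker_mod phi X) (eps X (pi 0 X h)) a0).
    { rewrite eps_pi. apply coker_eq0. exists k. exact Hk. }
    destruct (proj2 (eps_exact X) _ H) as [z Hz].
    exists (s 1 X z). exact (retract_lift Hz Hh).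
  - intros i X g Hg Hd.
    assert (Hy : aeq (d i X (pi (S i) X g)) a0).
    { rewrite <- pi_s, s_dd_pi, Hd. exact (mh0 (pi i) _). }
    destruct (proj2 (d_exact i X) _ Hy) as [z Hz].
    exists (s (S (S i)) X z). exact (retract_lift Hz Hg).
  - intros i Hi. unfold retract_idem. rewrite (P_zero Hi (pi i (A i) (idm (A i)))).
    exact (mh0 (s i) _).
Qed.

End ResolutionOfRetracts.

Lemma resolution_of_urc (C : PreAdd) (l : nat) : unif_reg_coherent l C ->
  forall (X1 X0 : C) (phi : hom X1 X0), exists R : IdemComplex X0, is_resolution l phi R.
Proof.
  intros H X1 X0 phi.
  destruct (H _ (coker_mod_fin_pres phi)) as [P [d [eps [Hfg [Hzero [Hepi [Hex0 Hex]]]]]]].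
  assert (Hretr : forall i, exists t : {A : C & (MHom (Yo A) (P i) * MHom (P i) (Yo A))%type},
             forall X x, aeq (fst (projT2 t) X (snd (projT2 t) X x)) x).
  { intros i. assert (Hi : fg_projective (P i)).
    { assert (i <= l \/ l < i) as [Hil | Hli] by lia;
        [apply Hfg, Hil | apply (zero_fg_projective X0), Hzero, Hli]. }
    destruct (fg_projective_retract Hi) as [A [pi [s Hs]]]. exists (existT _ A (pi, s)). exact Hs. }
  destruct (dep_choice Hretr) as [t Ht].
  eexists. exact (retract_complex_resolution Hepi Hex0 Hex Hzero
                    (pi := fun i => fst (projT2 (t i))) (s := fun i => snd (projT2 (t i))) Ht).
Qed.

Section Biproduct.
Variables (C : PreAdd) (A B P : C) (i1 : hom A P) (i2 : hom B P) (p1 : hom P A) (p2 : hom P B).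

Definition bp_col X (x : hom X A) (y : hom X B) : hom X P := aadd (comp i1 x) (comp i2 y).
Definition bp_row Y (f : hom A Y) (g : hom B Y) : hom P Y := aadd (comp f p1) (comp g p2).
Definition bp_diag (f : hom A A) (g : hom B B) : hom P P := bp_col (comp f p1) (comp g p2).

#[global] Instance bp_col_Proper X : Proper (aeq ==> aeq ==> aeq) (@bp_col X).
Proof. intros x x' Hx y y' Hy. unfold bp_col. rewrite Hx, Hy; reflexivity. Qed.

#[global] Instance bp_row_Proper Y : Proper (aeq ==> aeq ==> aeq) (@bp_row Y).
Proof. intros f f' Hf g g' Hg. unfold bp_row. rewrite Hf, Hg; reflexivity. Qed.

#[global] Instance bp_diag_Proper : Proper (aeq ==> aeq ==> aeq) bp_diag.
Proof. intros f f' Hf g g' Hg. unfold bp_diag. rewrite Hf, Hg; reflexivity. Qed.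

Lemma bp_col_comp X Y (x : hom X A) (y : hom X B) (z : hom Y X) :
  aeq (comp (bp_col x y) z) (bp_col (comp x z) (comp y z)).
Proof. unfold bp_col. rewrite compDl, <- !compA; reflexivity. Qed.

Lemma bp_comp_row Y Z (h : hom Y Z) (f : hom A Y) (g : hom B Y) :
  aeq (comp h (bp_row f g)) (bp_row (comp h f) (comp h g)).
Proof. unfold bp_row. rewrite compDr, !compA; reflexivity. Qed.

Lemma bp_col0 X : aeq (bp_col (@a0 (hom X A)) a0) a0.
Proof. unfold bp_col. rewrite !comp0r; apply aadd0. Qed.

Lemma bp_row0 Y : aeq (bp_row (@a0 (hom A Y)) a0) a0.
Proof. unfold bp_row. rewrite !comp0l; apply aadd0. Qed.

Lemma bp_colD X (x x' : hom X A) (y y' : hom X B) :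
  aeq (aadd (bp_col x y) (bp_col x' y')) (bp_col (aadd x x') (aadd y y')).
Proof.
  unfold bp_col. rewrite !compDr, <- !aaddA. apply aadd_proper; [reflexivity|].
  rewrite !aaddA, (aaddC (comp i2 y)); reflexivity.
Qed.

Hypothesis bp : is_biproduct i1 i2 p1 p2.

Lemma bp_p1_col X (x : hom X A) (y : hom X B) : aeq (comp p1 (bp_col x y)) x.
Proof.
  destruct bp as [H11 [_ [H12 _]]]. unfold bp_col.
  rewrite compDr, !compA, H11, H12, comp1l, comp0l; apply aadd0r.
Qed.

Lemma bp_p2_col X (x : hom X A) (y : hom X B) : aeq (comp p2 (bp_col x y)) y.
Proof.
  destruct bp as [_ [H22 [_ [H21 _]]]]. unfold bp_col.
  rewrite compDr, !compA, H22, H21, comp1l, comp0l; apply aadd0.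
Qed.

Lemma bp_row_col X Y (f : hom A Y) (g : hom B Y) (x : hom X A) (y : hom X B) :
  aeq (comp (bp_row f g) (bp_col x y)) (aadd (comp f x) (comp g y)).
Proof. unfold bp_row. rewrite compDl, <- !compA, bp_p1_col, bp_p2_col; reflexivity. Qed.

Lemma bp_colE X (g : hom X P) : aeq g (bp_col (comp p1 g) (comp p2 g)).
Proof.
  destruct bp as [_ [_ [_ [_ Hid]]]]. unfold bp_col.
  rewrite !compA, <- compDl, Hid, comp1l; reflexivity.
Qed.

Lemma bp_col_inj X (x x' : hom X A) (y y' : hom X B) :
  aeq (bp_col x y) (bp_col x' y') -> aeq x x' /\ aeq y y'.
Proof.
  intros H. split.
  - rewrite <- (bp_p1_col x y), H; apply bp_p1_col.
  - rewrite <- (bp_p2_col x y), H; apply bp_p2_col.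
Qed.

Lemma bp_diag_col X (f : hom A A) (g : hom B B) (x : hom X A) (y : hom X B) :
  aeq (comp (bp_diag f g) (bp_col x y)) (bp_col (comp f x) (comp g y)).
Proof.
  unfold bp_diag. rewrite bp_col_comp, <- !compA, bp_p1_col, bp_p2_col; reflexivity.
Qed.

Lemma bp_row_diag Y (f : hom A Y) (g : hom B Y) (u : hom A A) (v : hom B B) :
  aeq (comp (bp_row f g) (bp_diag u v)) (bp_row (comp f u) (comp g v)).
Proof. unfold bp_diag. rewrite bp_row_col, !compA; reflexivity. Qed.

Lemma bp_diag_diag (f u : hom A A) (g v : hom B B) :
  aeq (comp (bp_diag f g) (bp_diag u v)) (bp_diag (comp f u) (comp g v)).
Proof. unfold bp_diag at 2. rewrite bp_diag_col, !compA; reflexivity. Qed.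

End Biproduct.

Section Splice.
Variables (C : PreAdd) (l : nat) (X1 X0 : C) (phi : hom X1 X0) (R : IdemComplex X0).

Local Notation e := (iidem R).
Local Notation d := (idiff R).
Local Notation aug := (iaug R).

Hypothesis R_res : is_resolution l phi R.

Lemma aug_sub_gamma (gamma : hom X0 (iobj R 0)) (k0 : hom X0 X1) :
  aeq (comp aug gamma) (aadd (idm X0) (aopp (comp phi k0))) ->
  aeq (comp aug (aadd (e 0) (aopp (comp gamma aug)))) (comp phi (comp k0 aug)).
Proof.
  intros Haug.
  rewrite compDr, compNr, (res_aug_idem R_res), compA, Haug, compDl, comp1l, compNl.
  rewrite aoppD, aoppK, aaddA, aaddNr, aadd0, compA; reflexivity.
Qed.

(* The splice is [X0 <- B_1 (+) X0 <- B_2 (+) B_0 <- B_3 <- B_4 <- ...].  Its maps are built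
   from [gamma], a lift of [1_X0] through [aug] modulo [phi], and [sigma], a homotopy with
   [d_0 sigma = e_0 - gamma aug]; [w] shows that [phi] factors through the new augmentation. *)
Lemma splice_witnesses :
  exists (gamma : hom X0 (iobj R 0)) (k0 : hom X0 X1) (sigma : hom (iobj R 0) (iobj R 1))
         (w : hom X1 (iobj R 1)),
    fixed (e 0) gamma /\ aeq (comp aug gamma) (aadd (idm X0) (aopp (comp phi k0))) /\
    fixed (e 1) sigma /\ aeq (comp sigma (e 0)) sigma /\
    aeq (comp (d 0) sigma) (aadd (e 0) (aopp (comp gamma aug))) /\
    aeq (comp (d 0) w) (comp gamma phi).
Proof.
  destruct (res_aug_surj R_res (idm X0)) as [h0 [k0 Hid]].
  set (gamma := comp (e 0) h0).
  assert (Hgamma : fixed (e 0) gamma) by apply (fixed_idem (res_idem R_res 0)).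
  assert (Haug : aeq (comp aug gamma) (aadd (idm X0) (aopp (comp phi k0)))).
  { unfold gamma. rewrite compA, (res_aug_idem R_res), Hid, aaddK; reflexivity. }
  destruct (res_exact0 R_res (h := aadd (e 0) (aopp (comp gamma aug))) (k := comp k0 aug))
    as [s0 [Hs0 Hds0]].
  { apply fixedD; [apply (res_idem R_res 0) | apply fixedN, fixed_comp, Hgamma]. }
  { apply aug_sub_gamma, Haug. }
  destruct (res_exact0 R_res (h := comp gamma phi) (k := aadd (idm X1) (aopp (comp k0 phi))))
    as [w [_ Hw]].
  { apply fixed_comp, Hgamma. }
  { rewrite compA, Haug, compDl, compDr, comp1l, comp1r, compNl, compNr, compA; reflexivity. }
  exists gamma, k0, (comp s0 (e 0)), w. repeat split; auto.
  - apply fixed_comp, Hs0.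
  - rewrite <- compA, (res_idem R_res); reflexivity.
  - rewrite compA, Hds0, compDl, (res_idem R_res), compNl, <- compA, (res_aug_idem R_res).
    reflexivity.
Qed.

Variables (Q1 Q2 : C).
Variables (a1 : hom (iobj R 1) Q1) (b1 : hom X0 Q1) (pa1 : hom Q1 (iobj R 1)) (pb1 : hom Q1 X0).
Variables (a2 : hom (iobj R 2) Q2) (b2 : hom (iobj R 0) Q2).
Variables (pa2 : hom Q2 (iobj R 2)) (pb2 : hom Q2 (iobj R 0)).
Hypotheses (bp1 : is_biproduct a1 b1 pa1 pb1) (bp2 : is_biproduct a2 b2 pa2 pb2).
Variables (gamma : hom X0 (iobj R 0)) (k0 : hom X0 X1).
Variables (sigma : hom (iobj R 0) (iobj R 1)) (w : hom X1 (iobj R 1)).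
Hypothesis gamma_fixed : fixed (e 0) gamma.
Hypothesis aug_gamma : aeq (comp aug gamma) (aadd (idm X0) (aopp (comp phi k0))).
Hypotheses (sigma_fixed : fixed (e 1) sigma) (sigma_idem : aeq (comp sigma (e 0)) sigma).
Hypothesis diff_sigma : aeq (comp (d 0) sigma) (aadd (e 0) (aopp (comp gamma aug))).
Hypothesis diff_w : aeq (comp (d 0) w) (comp gamma phi).

Local Notation col1 := (bp_col a1 b1).
Local Notation row1 := (bp_row pa1 pb1).
Local Notation col2 := (bp_col a2 b2).
Local Notation row2 := (bp_row pa2 pb2).

Definition splice_obj (i : nat) : C :=
  match i with 0 => Q1 | 1 => Q2 | S (S j) => iobj R (S (S (S j))) end.

Definition splice_idem (i : nat) : hom (splice_obj i) (splice_obj i) :=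
  match i return hom (splice_obj i) (splice_obj i) with
  | 0 => bp_diag a1 b1 pa1 pb1 (e 1) (idm X0)
  | 1 => bp_diag a2 b2 pa2 pb2 (e 2) (e 0)
  | S (S j) => e (S (S (S j)))
  end.

Definition splice_aug : hom Q1 X0 := row1 (aopp (comp aug (d 0))) (comp phi k0).

Definition splice_diff (i : nat) : hom (splice_obj (S i)) (splice_obj i) :=
  match i return hom (splice_obj (S i)) (splice_obj i) with
  | 0 => row2 (col1 (d 1) a0) (col1 sigma aug)
  | 1 => col2 (d 2) a0
  | S (S j) => d (S (S (S j)))
  end.

Definition splice_complex : IdemComplex X0 := MkIdemComplex splice_idem splice_diff splice_aug.

Lemma splice_idem_idem i : aeq (comp (splice_idem i) (splice_idem i)) (splice_idem i).
Proof.
  destruct i as [|[|i]]; simpl.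
  - rewrite (bp_diag_diag bp1), (res_idem R_res), comp1l; reflexivity.
  - rewrite (bp_diag_diag bp2), !(res_idem R_res); reflexivity.
  - apply (res_idem R_res).
Qed.

Lemma splice_aug_idem : aeq (comp splice_aug (splice_idem 0)) splice_aug.
Proof.
  simpl. unfold splice_aug.
  rewrite (bp_row_diag bp1), compNl, <- compA, (res_diff_idem R_res), comp1r; reflexivity.
Qed.

Lemma splice_diff_idem i : aeq (comp (splice_diff i) (splice_idem (S i))) (splice_diff i).
Proof.
  destruct i as [|[|i]]; simpl.
  - rewrite (bp_row_diag bp2), !bp_col_comp, (res_diff_idem R_res), comp0l, sigma_idem.
    rewrite (res_aug_idem R_res); reflexivity.
  - rewrite bp_col_comp, (res_diff_idem R_res), comp0l; reflexivity.
  - apply (res_diff_idem R_res).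
Qed.

Lemma splice_idem_diff i : fixed (splice_idem i) (splice_diff i).
Proof.
  unfold fixed; destruct i as [|[|i]]; simpl.
  - rewrite bp_comp_row, !(bp_diag_col bp1), (res_idem_diff R_res), sigma_fixed, !comp1l.
    reflexivity.
  - rewrite (bp_diag_col bp2), (res_idem_diff R_res), comp0r; reflexivity.
  - apply (res_idem_diff R_res).
Qed.

Lemma splice_aug_diff : aeq (comp splice_aug (splice_diff 0)) a0.
Proof.
  simpl. unfold splice_aug. rewrite bp_comp_row, !(bp_row_col bp1), !compNl, <- !compA.
  rewrite (res_diff_diff R_res), diff_sigma, (aug_sub_gamma aug_gamma), !comp0r, aopp0, aadd0.
  rewrite compA, aaddN. apply bp_row0.
Qed.

Lemma splice_diff_diff i : aeq (comp (splice_diff i) (splice_diff (S i))) a0.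
Proof.
  destruct i as [|[|i]]; simpl.
  - rewrite (bp_row_col bp2), comp0r, aadd0r, bp_col_comp, (res_diff_diff R_res), comp0l.
    apply bp_col0.
  - rewrite bp_col_comp, (res_diff_diff R_res), comp0l. apply bp_col0.
  - apply (res_diff_diff R_res).
Qed.

Lemma splice_aug_phi : exists u, aeq splice_aug (comp phi u).
Proof.
  destruct (res_aug_diff R_res) as [t Ht]. exists (row1 (aopp t) k0).
  unfold splice_aug. rewrite bp_comp_row, compNr, <- Ht; reflexivity.
Qed.

Lemma splice_phi_aug : exists v, aeq phi (comp splice_aug v).
Proof.
  exists (col1 (aopp w) phi). unfold splice_aug.
  rewrite (bp_row_col bp1), compNl, compNr, aoppK, <- compA, diff_w, compA, aug_gamma.
  rewrite compDl, comp1l, compNl, asubK; reflexivity.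
Qed.

Lemma splice_exact1 X (g : hom X Q1) :
  fixed (splice_idem 0) g -> aeq (comp splice_aug g) a0 ->
  exists h, fixed (splice_idem 1) h /\ aeq (comp (splice_diff 0) h) g.
Proof.
  unfold fixed; simpl; unfold splice_aug.
  rewrite (bp_colE bp1 g). set (x1 := comp pa1 g). set (x0 := comp pb1 g).
  rewrite (bp_diag_col bp1), comp1l, (bp_row_col bp1), compNl, <- compA.
  intros Hg Hd. destruct (bp_col_inj bp1 Hg) as [Hx1 _]. apply aopp_add_eq0 in Hd.
  set (y0 := aadd (comp gamma x0) (comp (d 0) x1)).
  assert (Hy0 : aeq (comp aug y0) x0).
  { unfold y0. rewrite compDr, (compA aug gamma x0), aug_gamma, compDl, comp1l, compNl.
    rewrite Hd. apply asubK. }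
  assert (Hy0e : fixed (e 0) y0).
  { apply fixedD; apply fixed_comp; [exact gamma_fixed | apply (res_idem_diff R_res)]. }
  assert (Hsy : aeq (comp (d 0) (comp sigma y0)) (comp (d 0) x1)).
  { rewrite compA, diff_sigma, compDl, compNl, Hy0e, <- compA, Hy0.
    unfold y0. rewrite (aaddC (comp gamma x0)). apply aaddK. }
  destruct (res_exact R_res (i := 0) (g := aadd x1 (aopp (comp sigma y0)))) as [q [Hq Hdq]].
  { apply fixedD; [exact Hx1 | apply fixedN, fixed_comp, sigma_fixed]. }
  { rewrite compDr, compNr, Hsy. apply aaddNr. }
  exists (col2 q y0). split.
  - rewrite (bp_diag_col bp2), Hq, Hy0e; reflexivity.
  - rewrite (bp_row_col bp2), !bp_col_comp, bp_colD, Hdq, asubK, comp0l, aadd0, Hy0.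
    symmetry; apply (bp_colE bp1).
Qed.

Lemma splice_exact2 X (g : hom X Q2) :
  fixed (splice_idem 1) g -> aeq (comp (splice_diff 0) g) a0 ->
  exists h, fixed (e 3) h /\ aeq (comp (splice_diff 1) h) g.
Proof.
  unfold fixed; simpl.
  rewrite (bp_colE bp2 g). set (x2 := comp pa2 g). set (x0 := comp pb2 g).
  rewrite (bp_diag_col bp2), (bp_row_col bp2), !bp_col_comp, bp_colD, <- (bp_col0 a1 b1 X).
  intros Hg Hd. destruct (bp_col_inj bp2 Hg) as [Hx2 Hx0].
  destruct (bp_col_inj bp1 Hd) as [Hd1 Hd0]. rewrite comp0l, aadd0 in Hd0.
  assert (Hx0z : aeq x0 a0).
  { assert (H : aeq (comp (d 0) (aadd (comp (d 1) x2) (comp sigma x0))) a0)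
      by (rewrite Hd1; apply comp0r).
    rewrite compDr, (compA (d 0) (d 1)), (res_diff_diff R_res), comp0l, aadd0 in H.
    rewrite compA, diff_sigma, compDl, compNl, Hx0, <- compA, Hd0, comp0r, aopp0, aadd0r in H.
    exact H. }
  rewrite Hx0z, comp0r, aadd0r in Hd1.
  destruct (res_exact R_res (i := 1) Hx2 Hd1) as [h [Hh Hdh]].
  exists h. split; [exact Hh|].
  rewrite bp_col_comp, Hdh, comp0l, <- Hx0z. symmetry; apply (bp_colE bp2).
Qed.

Lemma splice_exact3 X (g : hom X (iobj R 3)) :
  fixed (e 3) g -> aeq (comp (splice_diff 1) g) a0 ->
  exists h, fixed (e 4) h /\ aeq (comp (d 3) h) g.
Proof.
  simpl. rewrite bp_col_comp, comp0l, <- (bp_col0 a2 b2 X). intros Hg Hd.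
  apply (res_exact R_res Hg), (bp_col_inj bp2 Hd).
Qed.

Lemma splice_complex_normal : 2 <= l -> is_normal_resolution l phi splice_complex.
Proof.
  intros Hl. constructor.
  - intros [|i]; [apply comp1l | apply splice_idem_idem].
  - intros [|i]; [apply splice_aug_idem | apply splice_diff_idem].
  - intros [|i]; [apply comp1l | apply splice_idem_diff].
  - intros [|i]; [apply splice_aug_diff | apply splice_diff_diff].
  - apply splice_aug_phi.
  - apply splice_phi_aug.
  - intros [|[|[|i]]] X g.
    + apply splice_exact1.
    + apply splice_exact2.
    + apply splice_exact3.
    + apply (res_exact R_res).
  - intros [|[|[|i]]] Hi; try lia. apply (res_zero R_res); lia.
Qed.

End Splice.

Lemma normal_resolution_of_resolution (C : PreAdd) (l : nat) (X1 X0 : C) (phi : hom X1 X0)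
  (R : IdemComplex X0) : 2 <= l -> is_additive C -> is_resolution l phi R ->
  exists R' : IdemComplex X0, is_normal_resolution l phi R'.
Proof.
  intros Hl Hadd HR.
  destruct (proj2 Hadd (iobj R 1) X0) as [Q1 [a1 [b1 [pa1 [pb1 bp1]]]]].
  destruct (proj2 Hadd (iobj R 2) (iobj R 0)) as [Q2 [a2 [b2 [pa2 [pb2 bp2]]]]].
  destruct (splice_witnesses HR)
    as [gamma [k0 [sigma [w [Hgamma [Haug [Hsigma [Hsigma_e [Hdsigma Hdw]]]]]]]]].
  eexists. exact (splice_complex_normal HR bp1 bp2 Hgamma Haug Hsigma Hsigma_e Hdsigma Hdw Hl).
Qed.

(* The second summand maps by [1 - e], so exactness at [P_(i+1)] becomes exactness of a
   sequence of morphisms of the category itself, to which flatness applies. *)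
Lemma nres_exact_at (C : PreAdd) (l : nat) (X1 X0 : C) (phi : hom X1 X0) (R : IdemComplex X0)
  (HR : is_normal_resolution l phi R) i (W : C)
  (i1 : hom (nobj R (S (S i))) W) (i2 : hom (nobj R (S i)) W)
  (p1 : hom W (nobj R (S (S i)))) (p2 : hom W (nobj R (S i))) :
  is_biproduct i1 i2 p1 p2 ->
  exact_at (bp_row p1 p2 (ndiff R (S i)) (aadd (idm _) (aopp (nidem R (S i))))) (ndiff R i).
Proof.
  intros bp. split.
  - rewrite bp_comp_row, (nres_diff_diff HR), compDr, comp1r, compNr, (nres_diff_idem HR).
    rewrite aaddNr. apply bp_row0.
  - intros Y g Hg.
    destruct (nres_exact HR (g := comp (nidem R (S i)) g)) as [h [_ Hh]].
    { apply fixed_idem, (nres_idem HR). }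
    { rewrite compA, (nres_diff_idem HR). exact Hg. }
    exists (bp_col i1 i2 h g). rewrite (bp_row_col bp), Hh, compDl, comp1l, compNl.
    rewrite aaddC, asubK; reflexivity.
Qed.

Lemma row_lift (C : PreAdd) (B2 B1 W X : C) (p1 : hom W B2) (p2 : hom W B1)
  (e2 : hom B2 B2) (e1 : hom B1 B1) (d1 : hom B2 B1) (w : hom X W) (g : hom X B1) :
  aeq (comp e1 e1) e1 -> aeq (comp d1 e2) d1 -> fixed e1 d1 -> fixed e1 g ->
  aeq g (comp (bp_row p1 p2 d1 (aadd (idm B1) (aopp e1))) w) ->
  aeq (comp d1 (comp e2 (comp p1 w))) g.
Proof.
  intros He1 Hde Hed Hg Hw.
  rewrite compA, Hde, <- Hg, Hw, (compA e1), bp_comp_row, compDr, comp1r, compNr, He1, aaddNr, Hed.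
  unfold bp_row. rewrite comp0l, aadd0r, compA; reflexivity.
Qed.

Section Lowering.
Variable N : NestedSeq.

Lemma HomIn_le k j (A B : ambient N) (f : hom A B) : HomIn N k A B f -> j <= k -> HomIn N j A B f.
Proof. intros H Hjk. induction Hjk; [exact H | apply IHHjk, HomIn_dec, H]. Qed.

Lemma ObjIn_le k j (A : ambient N) : ObjIn N k A -> j <= k -> ObjIn N j A.
Proof. intros H Hjk. induction Hjk; [exact H | apply IHHjk, ObjIn_dec, H]. Qed.

Definition exact_in (j : nat) (X0 X1 X2 : ambient N) (f0 : hom X0 X1) (f1 : hom X1 X2) : Prop :=
  aeq (comp f1 f0) a0 /\
  forall (X : ambient N) (g : hom X X1), HomIn N j _ _ g -> aeq (comp f1 g) a0 ->
    exists g' : hom X X0, HomIn N j _ _ g' /\ aeq g (comp f0 g').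

Lemma exact_in_of_exact_at j (X0 X1 X2 : subcat N j) (f0 : hom X0 X1) (f1 : hom X1 X2) :
  exact_at f0 f1 -> exact_in j (proj1_sig f0) (proj1_sig f1).
Proof.
  intros [H0 Hf]. split; [exact H0|]. intros X g Hg Hz.
  destruct (Hf (exist _ X (proj1 (HomIn_obj Hg))) (exist _ g Hg) Hz) as [g' Hg'].
  exists (proj1_sig g'). split; [exact (proj2_sig g') | exact Hg'].
Qed.

Lemma exact_at_of_exact_in j (X0 X1 X2 : subcat N j) (f0 : hom X0 X1) (f1 : hom X1 X2) :
  exact_in j (proj1_sig f0) (proj1_sig f1) -> exact_at f0 f1.
Proof.
  intros [H0 Hf]. split; [exact H0|]. intros X g Hz.
  destruct (Hf _ (proj1_sig g) (proj2_sig g) Hz) as [g' [Hg'1 Hg'2]].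
  exists (exist _ g' Hg'1). exact Hg'2.
Qed.

Hypothesis N_flat : forall m, flat (@incl_hom N m).

Lemma exact_in_pred m (X0 X1 X2 : ambient N) (f0 : hom X0 X1) (f1 : hom X1 X2)
  (H0 : HomIn N (S m) _ _ f0) (H1 : HomIn N (S m) _ _ f1) :
  exact_in (S m) f0 f1 -> exact_in m f0 f1.
Proof.
  intros Hex.
  pose (Y0 := exist _ X0 (proj1 (HomIn_obj H0)) : subcat N (S m)).
  pose (Y1 := exist _ X1 (proj2 (HomIn_obj H0)) : subcat N (S m)).
  pose (Y2 := exist _ X2 (proj2 (HomIn_obj H1)) : subcat N (S m)).
  apply (exact_in_of_exact_at (f0 := incl_hom (exist _ f0 H0 : @hom (subcat N (S m)) Y0 Y1))
                              (f1 := incl_hom (exist _ f1 H1 : @hom (subcat N (S m)) Y1 Y2))).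
  apply N_flat, exact_at_of_exact_in, Hex.
Qed.

Lemma exact_in_le k j (X0 X1 X2 : ambient N) (f0 : hom X0 X1) (f1 : hom X1 X2) :
  HomIn N k _ _ f0 -> HomIn N k _ _ f1 -> exact_in k f0 f1 -> j <= k -> exact_in j f0 f1.
Proof.
  intros H0 H1 Hex Hjk. induction Hjk; [exact Hex|].
  apply IHHjk; [apply HomIn_dec, H0 | apply HomIn_dec, H1 | apply exact_in_pred; assumption].
Qed.

Lemma lower_lift k (l : nat) (X1 X0 : subcat N k) (phi : hom X1 X0) (R : IdemComplex X0)
  (HR : is_normal_resolution l phi R) (Hadd : is_additive (subcat N k))
  j i (X : ambient N) (g : hom X (proj1_sig (nobj R (S i)))) :
  j <= k -> HomIn N j _ _ g ->
  fixed (proj1_sig (nidem R (S i))) g -> aeq (comp (proj1_sig (ndiff R i)) g) a0 ->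
  exists h : hom X (proj1_sig (nobj R (S (S i)))),
    HomIn N j _ _ h /\ fixed (proj1_sig (nidem R (S (S i)))) h /\
    aeq (comp (proj1_sig (ndiff R (S i))) h) g.
Proof.
  intros Hjk Hg Hge Hgd.
  destruct (proj2 Hadd (nobj R (S (S i))) (nobj R (S i))) as [W [i1 [i2 [p1 [p2 bp]]]]].
  pose proof (exact_in_of_exact_at (nres_exact_at HR bp)) as Hex.
  destruct (proj2 (exact_in_le (proj2_sig _) (proj2_sig _) Hex Hjk) X g Hg Hgd) as [w [Hw Hgw]].
  exists (comp (proj1_sig (nidem R (S (S i)))) (comp (proj1_sig p1) w)). split; [|split].
  - apply HomIn_comp; [apply (HomIn_le (proj2_sig (nidem R _))), Hjk|].
    apply HomIn_comp; [apply (HomIn_le (proj2_sig p1)), Hjk | exact Hw].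
  - apply fixed_idem, (nres_idem HR).
  - apply (row_lift (C := ambient N) (p1 := proj1_sig p1) (p2 := proj1_sig p2)
             (e1 := proj1_sig (nidem R (S i)))).
    + exact (nres_idem HR (S i)).
    + exact (nres_diff_idem HR (S i)).
    + exact (nres_idem_diff HR (S i)).
    + exact Hge.
    + exact Hgw.
Qed.

End Lowering.

Fixpoint last_upto (P : nat -> Prop) (n : nat) : nat :=
  match n with
  | 0 => 0
  | S n' => if excluded_middle_informative (P (S n')) then S n' else last_upto P n'
  end.

Lemma last_upto_spec (P : nat -> Prop) n : P 0 -> P (last_upto P n).
Proof.
  intros H0; induction n as [|n IH]; simpl; [exact H0|].
  destruct (excluded_middle_informative (P (S n))); auto.
Qed.

Lemma last_upto_max (P : nat -> Prop) n j : j <= n -> P j -> j <= last_upto P n.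
Proof.
  induction n as [|n IH]; intros Hj HP; simpl; [lia|].
  destruct (excluded_middle_informative (P (S n))) as [_|HnP]; [lia|].
  apply IH; [|exact HP]. assert (j <> S n) by (intros ->; contradiction). lia.
Qed.

(* Capping the search at [m] keeps the level finite even if [Q m] holds at every level. *)
Lemma unbounded_levels (Q : nat -> nat -> Prop) :
  (forall m, Q m 0) -> (forall j, eventually (fun m => Q m j)) ->
  exists lev : nat -> nat, (forall m, Q m (lev m)) /\ forall j, eventually (fun m => j <= lev m).
Proof.
  intros H0 HQ. exists (fun m => last_upto (Q m) m). split.
  - intros m. apply last_upto_spec, H0.
  - intros j. destruct (HQ j) as [n0 Hn0]. exists (max n0 j). intros m Hm.
    apply last_upto_max; [lia | apply Hn0; lia].
Qed.

Section Assembly.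
Variables (N : NestedSeq) (l : nat) (F : SeqFilter).
Hypothesis N_add : forall m, is_additive (subcat N m).
Hypothesis N_flat : forall m, flat (@incl_hom N m).
Variable lev : nat -> nat.
Hypothesis lev_unbounded : forall j, eventually (fun m => j <= lev m).

Lemma levels_obj (a : forall m, subcat N (lev m)) j :
  eventually (fun m => ObjIn N j (proj1_sig (a m))).
Proof.
  apply (ev_mono (P := fun m => j <= lev m)); [|apply lev_unbounded].
  intros m Hm. exact (ObjIn_le (proj2_sig (a m)) Hm).
Qed.

Lemma levels_hom (a b : forall m, subcat N (lev m)) (f : forall m, hom (a m) (b m)) j :
  eventually (fun m => HomIn N j _ _ (proj1_sig (f m))).
Proof.
  apply (ev_mono (P := fun m => j <= lev m)); [|apply lev_unbounded].
  intros m Hm. exact (HomIn_le (proj2_sig (f m)) Hm).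
Qed.

Definition seq_obj (a : forall m, subcat N (lev m)) : SObj N :=
  exist _ (fun m => proj1_sig (a m)) (levels_obj a).

Definition seq_hom (a b : forall m, subcat N (lev m)) (f : forall m, hom (a m) (b m)) :
  @hom (seqcat N F) (seq_obj a) (seq_obj b) :=
  exist _ (fun m => proj1_sig (f m)) (levels_hom f).

Variables (X1 X0 : SObj N) (phi : @hom (seqcat N F) X1 X0).
Hypothesis phi_lev : forall m, HomIn N (lev m) _ _ (proj1_sig phi m).

Definition phi_at (m : nat) :
  @hom (subcat N (lev m)) (exist _ (proj1_sig X1 m) (proj1 (HomIn_obj (phi_lev m))))
                          (exist _ (proj1_sig X0 m) (proj2 (HomIn_obj (phi_lev m)))) :=
  exist _ (proj1_sig phi m) (phi_lev m).

Variable R : forall m, IdemComplex (exist _ (proj1_sig X0 m) (proj2 (HomIn_obj (phi_lev m)))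
                                     : subcat N (lev m)).
Hypothesis R_res : forall m, is_normal_resolution l (phi_at m) (R m).

Definition seq_complex : IdemComplex (C := seqcat N F) X0 :=
  MkIdemComplex (C := seqcat N F) (X0 := X0)
    (fun i => seq_hom (fun m => iidem (R m) i)) (fun i => seq_hom (fun m => idiff (R m) i))
    (seq_hom (fun m => iaug (R m)) : @hom (seqcat N F) (seq_obj (fun m => iobj (R m) 0)) X0).

Lemma seq_eq_pw (a b : seqcat N F) (x y : hom a b) :
  (forall m, aeq (proj1_sig x m) (proj1_sig y m)) -> aeq x y.
Proof. intros H; exact (sf_pw F H). Qed.

(* The lifting hypotheses sit inside the last conjunct so that a lift exists at every stage:
   [0] where they fail. *)
Lemma stage_lift m i j (X : ambient N) (g : hom X (proj1_sig (iobj (R m) i))) :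
  j <= lev m -> HomIn N j _ _ g ->
  exists h : hom X (proj1_sig (iobj (R m) (S i))),
    HomIn N j _ _ h /\ fixed (proj1_sig (iidem (R m) (S i))) h /\
    (fixed (proj1_sig (iidem (R m) i)) g -> aeq (comp (proj1_sig (ndiff (R m) i)) g) a0 ->
     aeq (comp (proj1_sig (idiff (R m) i)) h) g).
Proof.
  intros Hj Hg.
  destruct (classic (fixed (proj1_sig (iidem (R m) i)) g /\
                     aeq (comp (proj1_sig (ndiff (R m) i)) g) a0)) as [[He Hd]|Hn].
  - destruct (lower_lift N_flat (R_res m) (N_add (lev m)) Hj Hg He Hd) as [h Hh].
    exists h. split; [apply Hh | split; [apply Hh | intros _ _; apply Hh]].
  - exists a0. split; [|split].
    + apply HomIn_zero; [exact (proj1 (HomIn_obj Hg)) |].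
      exact (ObjIn_le (proj2_sig (iobj (R m) (S i))) Hj).
    + apply comp0r.
    + intros He Hd. exfalso. apply Hn; split; assumption.
Qed.

Lemma seq_lift i (X : SObj N) (g : forall m, hom (proj1_sig X m) (proj1_sig (iobj (R m) i))) :
  (forall j, eventually (fun m => HomIn N j _ _ (g m))) ->
  exists h : forall m, hom (proj1_sig X m) (proj1_sig (iobj (R m) (S i))),
    (forall j, eventually (fun m => HomIn N j _ _ (h m))) /\
    (forall m, fixed (proj1_sig (iidem (R m) (S i))) (h m)) /\
    (forall m, fixed (proj1_sig (iidem (R m) i)) (g m) ->
               aeq (comp (proj1_sig (ndiff (R m) i)) (g m)) a0 ->
               aeq (comp (proj1_sig (idiff (R m) i)) (h m)) (g m)).
Proof.
  intros Hg.
  destruct (@unbounded_levels (fun m n => n <= lev m /\ HomIn N n _ _ (g m)))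
    as [jl [Hjl Hjl_unb]].
  { intros m. split; [lia | apply HomIn_0]. }
  { intros j. apply (ev_mono (P := fun m => HomIn N j _ _ (g m) /\ j <= lev m)).
    - intros m [H1 H2]. split; assumption.
    - apply ev_and; [apply Hg | apply lev_unbounded]. }
  destruct (dep_choice (fun m => stage_lift (proj1 (Hjl m)) (proj2 (Hjl m)))) as [h Hh].
  exists h. split; [|split].
  - intros j. apply (ev_mono (P := fun m => j <= jl m)); [|apply Hjl_unb].
    intros m Hm. exact (HomIn_le (proj1 (Hh m)) Hm).
  - intros m; apply Hh.
  - intros m; apply Hh.
Qed.

Lemma seq_complex_normal : is_normal_resolution l phi seq_complex.
Proof.
  constructor.
  - intros [|i]; apply seq_eq_pw; intros m;
      [exact (nres_idem (R_res m) 0) | exact (nres_idem (R_res m) (S i))].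
  - intros [|i]; apply seq_eq_pw; intros m;
      [exact (nres_diff_idem (R_res m) 0) | exact (nres_diff_idem (R_res m) (S i))].
  - intros [|i]; apply seq_eq_pw; intros m;
      [exact (nres_idem_diff (R_res m) 0) | exact (nres_idem_diff (R_res m) (S i))].
  - intros [|i]; apply seq_eq_pw; intros m;
      [exact (nres_diff_diff (R_res m) 0) | exact (nres_diff_diff (R_res m) (S i))].
  - destruct (dep_choice (fun m => nres_aug_phi (R_res m))) as [u Hu].
    exists (seq_hom u). apply seq_eq_pw; intros m; exact (Hu m).
  - destruct (dep_choice (fun m => nres_phi_aug (R_res m))) as [v Hv].
    exists (seq_hom v). apply seq_eq_pw; intros m; exact (Hv m).
  - intros [|i] X g Hge Hgd;
      destruct (seq_lift (proj2_sig g)) as [h [Hh [Hhe Hhd]]];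
      exists (exist _ h Hh);
      (split; [ apply seq_eq_pw; exact Hhe
              | exact (sf_mono (fun m H => Hhd m (proj1 H) (proj2 H)) (sf_and Hge Hgd)) ]).
  - intros [|i] Hi; [lia|]. apply seq_eq_pw; intros m; exact (nres_zero (R_res m) Hi).
Qed.

End Assembly.

Lemma seqcat_normal_resolutions (N : NestedSeq) (l : nat) (F : SeqFilter) :
  2 <= l -> (forall m, is_additive (subcat N m)) -> (forall m, unif_reg_coherent l (subcat N m)) ->
  (forall m, flat (@incl_hom N m)) ->
  forall (X1 X0 : seqcat N F) (phi : hom X1 X0),
    exists R : IdemComplex X0, is_normal_resolution l phi R.
Proof.
  intros Hl Hadd Hurc Hflat X1 X0 phi.
  destruct (@unbounded_levels (fun m n => HomIn N n _ _ (proj1_sig phi m))) as [lev [Hlev Hunb]].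
  { intros m; apply HomIn_0. }
  { exact (proj2_sig phi). }
  assert (HR : forall m, exists R, is_normal_resolution l (phi_at Hlev m) R).
  { intros m. destruct (resolution_of_urc (Hurc (lev m)) (phi_at Hlev m)) as [R HR].
    exact (normal_resolution_of_resolution Hl (Hadd (lev m)) HR). }
  destruct (dep_choice HR) as [R HR'].
  eexists. exact (seq_complex_normal Hadd Hflat Hunb HR').
Qed.

Theorem mainTheorem9 (N : NestedSeq) (l : nat) :
  2 <= l ->
  (forall m : nat, is_additive (subcat N m)) ->
  (forall m : nat, unif_reg_coherent l (subcat N m)) ->
  (forall m : nat, flat (@incl_hom N m)) ->
  unif_reg_coherent l (SCat N) /\ unif_reg_coherent l (LCat N).
Proof.
  intros Hl Hadd Hurc Hflat.
  split; apply urc_of_normal_resolutions, seqcat_normal_resolutions; assumption.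
Qed.
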